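(* Let $f\colon\mathbb{R}^n\to\mathbb{R}$ be continuous and suppose there is $\gamma>0$ such that (i) the set $S_\gamma=\{z\in\mathbb{R}^n : f(z)\le\inf f+\gamma\}$ is compact, and (ii) every $x\in S_\gamma$ with $0\in\partial f(x)$ is a global minimizer of $f$. Let the MAD parameters $x^1\in\mathbb{R}^n$, $\alpha$, $t_1,\tau,T\in(0,\infty)$, $\eta_-\in(0,1)$, $\eta_+>1$, $\theta\in(0,1)$, $\delta>0$, $g^0\in\mathbb{R}^n$ satisfy $\alpha\in(1-\sqrt{\eta_-},1+\sqrt{\eta_-})$, and suppose there is a global minimizer $x^\star$ of $f$ with $t_1\ge\tau$ and $T\ge t_1\ge\|x^\star-x^1\|^2/(2\gamma)$. Let $\{x^k\},\{t_k\}$ be generated by MAD (described in the context). If the sequence $\{u(x^k,t_k)\}$ is monotonically decreasing, then $\{x^k\}$ is bounded.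
   Context: For $t>0$, $\operatorname{prox}_{tf}(x)=\operatorname{argmin}_{z}\big(f(z)+\frac{1}{2t}\|z-x\|^2\big)$ and $u(x,t)=\inf_{z}\big(f(z)+\frac{1}{2t}\|z-x\|^2\big)$. The subdifferential $\partial f(\bar x)$ is the set of all $v$ with $f(x)\ge f(\bar x)+\langle v,x-\bar x\rangle+o(\|x-\bar x\|)$ as $x\to\bar x$. MAD: for $k=1,2,\dots$: choose $\hat x^k\in\operatorname{prox}_{t_kf}(x^k)$; set $g^k=(x^k-\hat x^k)/t_k$; set $x^{k+1}=x^k-\alpha t_kg^k$; set $t_{k+1}=\min(\eta_+t_k,T)$ if $\|g^k\|\le\theta\|g^{k-1}\|+\delta$, and $t_{k+1}=\max(\eta_-t_k,\tau)$ otherwise. *)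

From HB Require Import structures.
From mathcomp Require Import all_boot all_order all_algebra.
From mathcomp Require Import all_classical all_reals all_analysis.
Set Implicit Arguments. Unset Strict Implicit. Unset Printing Implicit Defensive.
Import Order.TTheory GRing.Theory Num.Theory.
Import numFieldNormedType.Exports.
Local Open Scope classical_set_scope.
Local Open Scope ring_scope.

Section MADDefs.
Variables (R : realType) (n : nat).
Notation vec := 'rV[R]_n.

Definition dotv (u v : vec) : R := \sum_(i < n) u ord0 i * v ord0 i.
Definition enorm (u : vec) : R := Num.sqrt (dotv u u).

Definition finf (f : vec -> R) : R := inf [set f z | z in [set: vec]].

Definition sublevel (f : vec -> R) (gamma : R) : set vec :=
  [set z | f z <= finf f + gamma].

Definition global_minimizer (f : vec -> R) (x : vec) : Prop :=
  forall z, f x <= f z.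

(* (Frechet) subdifferential: v \in \partial f(xb) iff
   f x >= f xb + <v, x - xb> + o(||x - xb||) as x -> xb,
   written out with epsilon-delta. *)
Definition subdiff (f : vec -> R) (xb v : vec) : Prop :=
  forall eps : R, 0 < eps -> exists2 d : R, 0 < d &
    forall x : vec, enorm (x - xb) < d ->
      f xb + dotv v (x - xb) - eps * enorm (x - xb) <= f x.

Definition prox_obj (f : vec -> R) (t : R) (x z : vec) : R :=
  f z + (enorm (z - x)) ^+ 2 / (2 * t).

Definition in_prox (f : vec -> R) (t : R) (x xh : vec) : Prop :=
  forall z, prox_obj f t x xh <= prox_obj f t x z.

Definition moreau (f : vec -> R) (x : vec) (t : R) : R :=
  inf [set prox_obj f t x z | z in [set: vec]].

(* The MAD iteration, for k >= 1, with g 0 = g^0 given and x 1 = x^1, t 1 = t_1. *)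
Definition MAD_step (f : vec -> R) (alpha eta_m eta_p theta delta tau T : R)
    (x xh g : nat -> vec) (t : nat -> R) (k : nat) : Prop :=
  [/\ in_prox f (t k) (x k) (xh k),
      g k = (t k)^-1 *: (x k - xh k),
      x k.+1 = x k - (alpha * t k) *: g k &
      t k.+1 = if enorm (g k) <= theta * enorm (g k.-1) + delta
               then Num.min (eta_p * t k) T
               else Num.max (eta_m * t k) tau].

End MADDefs.

From HB Require Import structures.
From mathcomp Require Import all_boot all_order all_algebra.
From mathcomp Require Import all_classical all_reals all_analysis.
From mathcomp Require Import lra.
Set Implicit Arguments. Unset Strict Implicit. Unset Printing Implicit Defensive.
Import Order.TTheory GRing.Theory Num.Theory.
Import numFieldNormedType.Exports.
Local Open Scope classical_set_scope.
Local Open Scope ring_scope.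

(* Since the Moreau envelope decreases along the iterates and the prox point
   realises it, every prox point satisfies
   f(xh_k) + |xh_k - x_k|^2 / (2 t_k) <= u(x_1, t_1) <= f(xs) + gamma,
   the last step testing the infimum defining u(x_1, t_1) at a minimizer z = xs.
   Hence every xh_k lies in the compact set S_gamma, and, since t_k <= T,
   |xh_k - x_k|^2 <= 2 T gamma; so x_k stays within a bounded distance of a
   bounded set. *)

Lemma normr_entry_le (R : realType) (m p : nat) (A : 'M[R]_(m, p)) i j :
  `|A i j| <= `|A|.
Proof. by rewrite [`|A|]mx_normrE (le_bigmax _ (fun ij => `|A ij.1 ij.2|) (i, j)). Qed.

Section EuclideanNorm.
Variables (R : realType) (n : nat).
Implicit Types v : 'rV[R]_n.

Lemma enorm_ge0 v : 0 <= enorm v.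
Proof. exact: sqrtr_ge0. Qed.

Lemma enorm_le_sqrt v c : enorm v ^+ 2 <= c -> enorm v <= Num.sqrt c.
Proof.
by move=> /ler_wsqrtr; rewrite sqrtr_sqr ger0_norm ?enorm_ge0.
Qed.

Lemma normr_le_enorm v : `|v| <= enorm v.
Proof.
rewrite [`|v|]mx_normrE; apply: bigmax_le => [|[i j] _]; first exact: enorm_ge0.
rewrite /= (ord1 i) -sqrtr_sqr ler_wsqrtr // /dotv (bigD1 j) //= expr2 lerDl.
by apply: sumr_ge0 => k _; rewrite -expr2 sqr_ge0.
Qed.

Lemma enorm_le_normr v : enorm v <= Num.sqrt n%:R * `|v|.
Proof.
rewrite -[X in _ * X](@ger0_norm _ `|v|) // -sqrtr_sqr -sqrtrM //.
rewrite ler_wsqrtr // /dotv mulr_natl -[n in _ *+ n]card_ord -sumr_const.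
apply: ler_sum => i _; rewrite -expr2 -real_normK ?num_real //.
by rewrite lerXn2r ?nnegrE // normr_entry_le.
Qed.

End EuclideanNorm.

Section ProxPoints.
Variables (R : realType) (n : nat) (f : 'rV[R]_n -> R).
Implicit Types (t gamma : R) (x z xs : 'rV[R]_n).

Lemma finf_global_minimizer xs : global_minimizer f xs -> finf f = f xs.
Proof.
move=> xs_min; apply/le_anti/andP; split.
  by apply: ge_inf; [exists (f xs) => _ [z _ <-] | exists xs].
by apply: lb_le_inf; [exists (f xs), xs | move=> _ [z _ <-]].
Qed.

Lemma in_prox_moreau t x z : in_prox f t x z -> moreau f x t = prox_obj f t x z.
Proof.
move=> z_prox; apply/le_anti/andP; split.
  by apply: ge_inf; [exists (prox_obj f t x z) => _ [y _ <-] | exists z].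
by apply: lb_le_inf; [exists (prox_obj f t x z), z | move=> _ [y _ <-]].
Qed.

Lemma le_prox_obj t x z : 0 < t -> f z <= prox_obj f t x z.
Proof. by move=> t_gt0; rewrite lerDl divr_ge0 ?sqr_ge0 ?mulr_ge0 ?ltW. Qed.

Lemma prox_obj_minimizer_le t gamma x xs :
  global_minimizer f xs -> 0 < t -> 0 < gamma ->
  enorm (xs - x) ^+ 2 / (2 * gamma) <= t -> prox_obj f t x xs <= finf f + gamma.
Proof.
move=> xs_min t_gt0 gamma_gt0; rewrite (finf_global_minimizer xs_min) lerD2l.
by rewrite !ler_pdivrMr ?mulr_gt0 // [t * _]mulrCA [gamma * _]mulrCA [t * gamma]mulrC.
Qed.

Lemma prox_obj_le_sublevel t gamma x z : 0 < t ->
  prox_obj f t x z <= finf f + gamma -> sublevel f gamma z.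
Proof. by move=> t_gt0; apply: le_trans; apply: le_prox_obj. Qed.

Lemma prox_obj_le_dist t gamma x z xs : global_minimizer f xs -> 0 < t ->
  prox_obj f t x z <= finf f + gamma -> enorm (z - x) ^+ 2 <= 2 * t * gamma.
Proof.
move=> xs_min t_gt0; rewrite /prox_obj (finf_global_minimizer xs_min) => le_min_gamma.
have : enorm (z - x) ^+ 2 / (2 * t) <= gamma by have := xs_min z; lra.
by rewrite ler_pdivrMr ?mulr_gt0 // mulrC.
Qed.

End ProxPoints.

Lemma le_first_nonincreasing (R : numDomainType) (u : nat -> R) :
  (forall k, (1 <= k)%N -> u k.+1 <= u k) -> forall k, (1 <= k)%N -> u k <= u 1%N.
Proof.
by move=> u_noninc; elim=> [//|[//|k] IH] _; apply: le_trans (u_noninc _ _) (IH _).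
Qed.

Lemma MAD_stepsize_update_bounds (R : realType) (eta_m eta_p tau T s : R) (b : bool) :
  0 <= tau -> eta_m <= 1 -> 1 <= eta_p -> tau <= s <= T ->
  tau <= (if b then Num.min (eta_p * s) T else Num.max (eta_m * s) tau) <= T.
Proof.
move=> tau_ge0 eta_m_le1 eta_p_ge1 /andP[tau_le_s s_le_T].
case: b; rewrite ?le_min ?ge_min ?le_max ?ge_max lexx ?orbT ?andbT /=;
  apply/andP; split; nra.
Qed.

Lemma MAD_stepsize_bounds (R : realType) (n : nat) (f : 'rV[R]_n -> R)
    (alpha eta_m eta_p theta delta tau T : R) (x xh g : nat -> 'rV[R]_n)
    (t : nat -> R) :
  0 <= tau -> eta_m <= 1 -> 1 <= eta_p -> tau <= t 1%N -> t 1%N <= T ->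
  (forall k, (1 <= k)%N -> MAD_step f alpha eta_m eta_p theta delta tau T x xh g t k) ->
  forall k, (1 <= k)%N -> tau <= t k <= T.
Proof.
move=> tau_ge0 eta_m_le1 eta_p_ge1 tau_le_t1 t1_le_T step.
elim=> [//|[_ _|k IH _]]; first by rewrite tau_le_t1.
have [_ _ _ ->] := step k.+1 isT; exact: MAD_stepsize_update_bounds (IH isT).
Qed.

Theorem lemma7 (R : realType) (n : nat) (f : 'rV[R]_n -> R) (gamma : R)
  (alpha eta_m eta_p theta delta tau T : R) (xs : 'rV[R]_n)
  (x xh g : nat -> 'rV[R]_n) (t : nat -> R) :
  continuous f ->
  0 < gamma ->
  compact (sublevel f gamma) ->
  (forall z, sublevel f gamma z -> subdiff f z 0 -> global_minimizer f z) ->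
  0 < alpha -> 0 < t 1%N -> 0 < tau -> 0 < T ->
  0 < eta_m < 1 -> 1 < eta_p -> 0 < theta < 1 -> 0 < delta ->
  1 - Num.sqrt eta_m < alpha < 1 + Num.sqrt eta_m ->
  global_minimizer f xs ->
  tau <= t 1%N -> t 1%N <= T ->
  (enorm (xs - x 1%N)) ^+ 2 / (2 * gamma) <= t 1%N ->
  (forall k, (1 <= k)%N -> MAD_step f alpha eta_m eta_p theta delta tau T x xh g t k) ->
  (forall k, (1 <= k)%N -> moreau f (x k.+1) (t k.+1) <= moreau f (x k) (t k)) ->
  exists M : R, forall k, (1 <= k)%N -> enorm (x k) <= M.
Proof.
move=> _ gamma_gt0 S_compact _ _ _ tau_gt0 _ /andP[_ /ltW eta_m_le1] /ltW eta_p_ge1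
  _ _ _ xs_min tau_le_t1 t1_le_T x1_near step u_noninc.
have t_bounds := MAD_stepsize_bounds (ltW tau_gt0) eta_m_le1 eta_p_ge1
  tau_le_t1 t1_le_T step.
have t_gt0 k : (1 <= k)%N -> 0 < t k.
  by move=> /t_bounds /andP[/(lt_le_trans tau_gt0)].
have prox_le k : (1 <= k)%N -> prox_obj f (t k) (x k) (xh k) <= finf f + gamma.
  move=> k_ge1; have [xh_prox _ _ _] := step k k_ge1.
  have [xh1_prox _ _ _] := step 1%N isT.
  rewrite -(in_prox_moreau xh_prox).
  apply: le_trans (le_first_nonincreasing u_noninc k_ge1) _.
  rewrite (in_prox_moreau xh1_prox); apply: le_trans (xh1_prox xs) _.
  exact: prox_obj_minimizer_le xs_min (t_gt0 1%N isT) gamma_gt0 x1_near.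
have [M [_ S_bounded]] := compact_bounded S_compact.
exists (Num.sqrt n%:R * (Num.sqrt (2 * T * gamma) + (M + 1))) => k k_ge1.
apply: le_trans (enorm_le_normr _) _; rewrite ler_wpM2l ?sqrtr_ge0 //.
rewrite -(subrK (xh k) (x k)); apply: le_trans (ler_normD _ _) _; apply: lerD.
  rewrite distrC; apply: le_trans (normr_le_enorm _) _; apply: enorm_le_sqrt.
  apply: le_trans (prox_obj_le_dist xs_min (t_gt0 k k_ge1) (prox_le k k_ge1)) _.
  by rewrite ler_pM2r // ler_pM2l //; case/andP: (t_bounds k k_ge1).
apply: (S_bounded (M + 1)); first by rewrite ltrDl.
exact: prox_obj_le_sublevel (t_gt0 k k_ge1) (prox_le k k_ge1).
Qed.
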